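(* Let $\mathbf{m}=\{1,\dots,m\}$ for $m=2,3,4,5$. Suppose given: for each $m\in\{2,3,4,5\}$ a category $\mathcal{C}_{\mathbf m}$ with a functor $\otimes_{\mathbf m}:\mathcal{C}_{\mathbf m}\times\mathcal{C}_{\mathbf m}\to\mathcal{C}_{\mathbf m}$ and an associativity constraint $\alpha_{\mathbf m}$; and for each order-preserving injection $\lambda:\mathbf l\to\mathbf m$ with $l<m$, $m\in\{3,4,5\}$, a faithful functor $F_\lambda:\mathcal{C}_{\mathbf l}\to\mathcal{C}_{\mathbf m}$ that strictly respects the operations and associativity constraints (i.e. $F_\lambda(A\otimes B)=F_\lambda A\otimes F_\lambda B$, similarly on morphisms, and $F_\lambda(\alpha_{\mathbf l})=\alpha_{\mathbf m}$), such that $F_{\tau\circ\sigma}=F_\tau\circ F_\sigma$ whenever defined. For $1\le i<j\le m$ write $F_{ji}$ for $F_\lambda$ with $\lambda:\mathbf 2\to\mathbf m$, $\lambda(1)=i,\lambda(2)=j$. Let $P\in\mathcal{C}_{\mathbf 2}$ with an isomorphism $\theta:F_{32}(P)\otimes_{\mathbf 3}F_{21}(P)\to F_{31}(P)$ in $\mathcal{C}_{\mathbf 3}$; in any $\mathcal{C}_{\mathbf m}$ write $P_{ji}=F_{ji}(P)$ and $\theta_{kji}:P_{kj}\otimes P_{ji}\to P_{ki}$ ($i<j<k$) for the image of $\theta$ under the functor induced by the embedding $\mathbf 3\to\mathbf m$ with image $\{i,j,k\}$. Let $C$ be the automorphism of $P_{41}$ in $\mathcal{C}_{\mathbf 4}$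 defined by $$C=\theta_{431}\circ(\mathrm{id}_{P_{43}}\otimes\theta_{321})\circ\alpha_{\mathbf 4}\circ(\theta_{432}\otimes\mathrm{id}_{P_{21}})^{-1}\circ\theta_{421}^{-1}.$$ For a $4$-element subset $S=\{a<b<c<d\}\subseteq\mathbf 5$ let $C_S$ be the image of $C$ in $\mathcal{C}_{\mathbf 5}$ under the functor of the embedding $\mathbf 4\to\mathbf 5$ with image $S$ (an automorphism of $P_{da}$). Assume the analogue of the hypothesis of the idempotent theorem: the five automorphisms of $P_{51}$ $$C_{\{1,2,3,5\}},\; C_{\{1,2,4,5\}},\; C_{\{1,3,4,5\}},\; \theta_{521}\circ(C_{\{2,3,4,5\}}\otimes\mathrm{id}_{P_{21}})\circ\theta_{521}^{-1},\; \theta_{541}\circ(\mathrm{id}_{P_{54}}\otimes C_{\{1,2,3,4\}})\circ\theta_{541}^{-1}$$ all coincide. Then $C=\mathrm{id}_{P_{41}}$.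
   Context: An associativity constraint for a functor $\otimes$ on a category is a natural isomorphism $\alpha_{A,B,C}:(A\otimes B)\otimes C\to A\otimes(B\otimes C)$ satisfying the pentagon axiom $(\mathrm{id}_A\otimes\alpha_{B,C,D})\circ\alpha_{A,B\otimes C,D}\circ(\alpha_{A,B,C}\otimes\mathrm{id}_D)=\alpha_{A,B,C\otimes D}\circ\alpha_{A\otimes B,C,D}$. The pair $(P,\theta)$ is called an $F_\bullet$-idempotent, and $\theta$ is called compatible with $\alpha_\bullet$ if $C=\mathrm{id}$. *)

From mathcomp Require Import all_boot.
Set Implicit Arguments. Unset Strict Implicit. Unset Printing Implicit Defensive.

(* Categories, presented by objects, morphisms, domain/codomain, identities *)
(* and a composition [mcomp g f] (= g o f) that is only constrained on       *)
(* composable pairs (cod f = dom g).  Equality of morphisms is Leibniz.     *)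
Record Cat := MkCat {
  Ob : Type;
  Mor : Type;
  dom : Mor -> Ob;
  cod : Mor -> Ob;
  idm : Ob -> Mor;
  mcomp : Mor -> Mor -> Mor;
  dom_idm : forall A, dom (idm A) = A;
  cod_idm : forall A, cod (idm A) = A;
  dom_comp : forall f g, cod f = dom g -> dom (mcomp g f) = dom f;
  cod_comp : forall f g, cod f = dom g -> cod (mcomp g f) = cod g;
  comp_idl : forall f, mcomp (idm (cod f)) f = f;
  comp_idr : forall f, mcomp f (idm (dom f)) = f;
  mcompA : forall f g h, cod f = dom g -> cod g = dom h ->
    mcomp h (mcomp g f) = mcomp (mcomp h g) f
}.
Arguments dom {C} f : rename.
Arguments cod {C} f : rename.
Arguments idm {C} A : rename.
Arguments mcomp {C} g f : rename.

Record AssocCat := MkAssocCat {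
  acat :> Cat;
  tob : Ob acat -> Ob acat -> Ob acat;
  tmor : Mor acat -> Mor acat -> Mor acat;
  dom_tmor : forall f g, dom (tmor f g) = tob (dom f) (dom g);
  cod_tmor : forall f g, cod (tmor f g) = tob (cod f) (cod g);
  tmor_id : forall A B, tmor (idm A) (idm B) = idm (tob A B);
  tmor_comp : forall f g f' g', cod f = dom g -> cod f' = dom g' ->
    tmor (mcomp g f) (mcomp g' f') = mcomp (tmor g g') (tmor f f');
  alpha : Ob acat -> Ob acat -> Ob acat -> Mor acat;
  dom_alpha : forall A B C, dom (alpha A B C) = tob (tob A B) C;
  cod_alpha : forall A B C, cod (alpha A B C) = tob A (tob B C);
  alpha_iso : forall A B C, exists a' : Mor acat,
    [/\ dom a' = tob A (tob B C), cod a' = tob (tob A B) C,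
        mcomp a' (alpha A B C) = idm (tob (tob A B) C)
      & mcomp (alpha A B C) a' = idm (tob A (tob B C))];
  alpha_nat : forall f g h,
    mcomp (alpha (cod f) (cod g) (cod h)) (tmor (tmor f g) h)
    = mcomp (tmor f (tmor g h)) (alpha (dom f) (dom g) (dom h));
  pentagon : forall A B C D,
    mcomp (tmor (idm A) (alpha B C D))
         (mcomp (alpha A (tob B C) D) (tmor (alpha A B C) (idm D)))
    = mcomp (alpha A B (tob C D)) (alpha (tob A B) C D)
}.
Arguments tob {a} A B : rename.
Arguments tmor {a} f g : rename.
Arguments alpha {a} A B C : rename.

Definition is_functor (C D : Cat) (fo : Ob C -> Ob D) (fm : Mor C -> Mor D) :=
  [/\ forall f, dom (fm f) = fo (dom f),
      forall f, cod (fm f) = fo (cod f),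
      forall A, fm (idm A) = idm (fo A)
    & forall f g, cod f = dom g -> fm (mcomp g f) = mcomp (fm g) (fm f)].

Definition faithful (C D : Cat) (fm : Mor C -> Mor D) :=
  forall f g, dom f = dom g -> cod f = cod g -> fm f = fm g -> f = g.

Definition strict_assoc (C D : AssocCat) (fo : Ob C -> Ob D) (fm : Mor C -> Mor D) :=
  [/\ forall A B, fo (tob A B) = tob (fo A) (fo B),
      forall f g, fm (tmor f g) = tmor (fm f) (fm g)
    & forall A B E, fm (alpha A B E) = alpha (fo A) (fo B) (fo E)].

Definition incr (l m : nat) (lam : {ffun 'I_l -> 'I_m}) :=
  forall i j : 'I_l, i < j -> lam i < lam j.

Definition compf (l m n : nat) (t : {ffun 'I_m -> 'I_n}) (s : {ffun 'I_l -> 'I_m})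
  : {ffun 'I_l -> 'I_n} := [ffun x => t (s x)].

(* The map k |-> s_k from {1..l} to {1..m}, given by the 1-based list s.
   Ordinals are 0-based, so position k (0-based) goes to s_(k+1) - 1.
   (m.-1.+1 reduces to m for every concrete m >= 1.) *)
Definition emb (m l : nat) (s : seq nat) : {ffun 'I_l -> 'I_m.-1.+1} :=
  [ffun k : 'I_l => inord (nth 0 s k).-1].

Section Objects.
Variables (C : nat -> AssocCat)
  (Fo : forall l m, {ffun 'I_l -> 'I_m} -> Ob (C l) -> Ob (C m))
  (Fm : forall l m, {ffun 'I_l -> 'I_m} -> Mor (C l) -> Mor (C m))
  (P : Ob (C 2)) (th th' : Mor (C 3)).

Definition Pji (m i j : nat) : Ob (C m.-1.+1) := Fo (emb m 2 [:: i; j]) P.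
Definition thk (m i j k : nat) : Mor (C m.-1.+1) := Fm (emb m 3 [:: i; j; k]) th.
Definition thk' (m i j k : nat) : Mor (C m.-1.+1) := Fm (emb m 3 [:: i; j; k]) th'.

Definition Cmor : Mor (C 4) :=
  mcomp (thk 4 1 3 4)
  (mcomp (tmor (idm (Pji 4 3 4)) (thk 4 1 2 3))
  (mcomp (alpha (Pji 4 3 4) (Pji 4 2 3) (Pji 4 1 2))
  (mcomp (tmor (thk' 4 2 3 4) (idm (Pji 4 1 2)))
        (thk' 4 1 2 4)))).

Definition CS (S : seq nat) : Mor (C 5) := Fm (emb 5 4 S) Cmor.
End Objects.

From mathcomp Require Import all_boot zify.
From Stdlib Require Import ProofIrrelevance.
Set Implicit Arguments. Unset Strict Implicit. Unset Printing Implicit Defensive.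

(* For a quadruple d > c > b > a the defect C_dcba is the automorphism of
   P_da comparing, across the associator, the two composites of thetas
   (P_dc (x) P_cb) (x) P_ba -> P_da and P_dc (x) (P_cb (x) P_ba) -> P_da.
   C is the defect of 4 > 3 > 2 > 1 in C_4, and C_S is the defect of S in C_5.
   In C_5, composing thetas from each of the five bracketings of
   P_54 (x) P_43 (x) P_32 (x) P_21 down to P_51 gives five paths; each edge
   of Mac Lane's pentagon intertwines two of them through one of the five
   automorphisms of the hypothesis.  If these all equal E, going around the
   pentagon both ways and using the pentagon axiom gives E o Z = Z for a split
   epimorphism Z, so E = id; faithfulness of the embedding {1,2,3,5} then
   gives C = id. *)

(* Working with these typed hom-sets turns every side condition "cod f = dom g"
   of the raw composition into a typing constraint. *)
Record hom (A : AssocCat) (X Y : Ob A) :=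
  Hom { hmor : Mor A; hom_dom : dom hmor = X; hom_cod : cod hmor = Y }.
Arguments Hom {A X Y} hmor hom_dom hom_cod.

Lemma hom_eq (A : AssocCat) X Y (f g : @hom A X Y) : hmor f = hmor g -> f = g.
Proof.
by case: f g => f fd fc [g gd gc] /= Efg; subst g; f_equal; apply: proof_irrelevance.
Qed.

Lemma hom_link (A : AssocCat) X Y Z (f : @hom A X Y) (g : hom Y Z) :
  cod (hmor f) = dom (hmor g).
Proof. by rewrite hom_cod hom_dom. Qed.

Section TypedOperations.
Variable A : AssocCat.

Definition hcomp X Y Z (g : @hom A Y Z) (f : hom X Y) : hom X Z :=
  Hom (mcomp (hmor g) (hmor f)) (etrans (dom_comp (hom_link f g)) (hom_dom f))
      (etrans (cod_comp (hom_link f g)) (hom_cod g)).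

Definition hid (X : Ob A) : hom X X := Hom (idm X) (dom_idm X) (cod_idm X).

Definition htens X Y X' Y' (f : @hom A X Y) (g : hom X' Y') :
    hom (tob X X') (tob Y Y') :=
  Hom (tmor (hmor f) (hmor g))
      (etrans (dom_tmor _ _) (f_equal2 tob (hom_dom f) (hom_dom g)))
      (etrans (cod_tmor _ _) (f_equal2 tob (hom_cod f) (hom_cod g))).

Definition hassoc (X Y Z : Ob A) : hom (tob (tob X Y) Z) (tob X (tob Y Z)) :=
  Hom (alpha X Y Z) (dom_alpha X Y Z) (cod_alpha X Y Z).

Lemma hcompA X Y Z W (f : hom X Y) (g : hom Y Z) (h : hom Z W) :
  hcomp h (hcomp g f) = hcomp (hcomp h g) f.
Proof. by apply: hom_eq; apply: mcompA; apply: hom_link. Qed.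

Lemma hcomp1l X Y (f : hom X Y) : hcomp (hid Y) f = f.
Proof. by apply: hom_eq => /=; have := comp_idl (hmor f); rewrite hom_cod. Qed.

Lemma hcomp1r X Y (f : hom X Y) : hcomp f (hid X) = f.
Proof. by apply: hom_eq => /=; have := comp_idr (hmor f); rewrite hom_dom. Qed.

Lemma htens_id (X Y : Ob A) : htens (hid X) (hid Y) = hid (tob X Y).
Proof. by apply: hom_eq; apply: tmor_id. Qed.

Lemma htens_comp X Y Z X' Y' Z' (f : hom X Y) (g : hom Y Z)
    (f' : hom X' Y') (g' : hom Y' Z') :
  htens (hcomp g f) (hcomp g' f') = hcomp (htens g g') (htens f f').
Proof. by apply: hom_eq; apply: tmor_comp; apply: hom_link. Qed.

Lemma hassoc_nat X1 X2 X3 Y1 Y2 Y3 (f : hom X1 Y1) (g : hom X2 Y2) (h : hom X3 Y3) :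
  hcomp (hassoc Y1 Y2 Y3) (htens (htens f g) h)
  = hcomp (htens f (htens g h)) (hassoc X1 X2 X3).
Proof.
apply: hom_eq => /=; have := alpha_nat (hmor f) (hmor g) (hmor h).
by rewrite !hom_cod !hom_dom.
Qed.

Lemma hpentagon (X Y Z W : Ob A) :
  hcomp (htens (hid X) (hassoc Y Z W))
        (hcomp (hassoc X (tob Y Z) W) (htens (hassoc X Y Z) (hid W)))
  = hcomp (hassoc X Y (tob Z W)) (hassoc (tob X Y) Z W).
Proof. by apply: hom_eq; apply: pentagon. Qed.

Lemma hcompKl X Y Z (g : hom Y X) (f : hom X Y) (x : hom Z X) :
  hcomp g f = hid X -> hcomp g (hcomp f x) = x.
Proof. by move=> Egf; rewrite hcompA Egf hcomp1l. Qed.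

Lemma htens_compl X Y Z W (f : hom X Y) (g : hom Y Z) :
  htens (hcomp g f) (hid W) = hcomp (htens g (hid W)) (htens f (hid W)).
Proof. by rewrite -htens_comp hcomp1l. Qed.

Lemma htens_compr X Y Z W (f : hom X Y) (g : hom Y Z) :
  htens (hid W) (hcomp g f) = hcomp (htens (hid W) g) (htens (hid W) f).
Proof. by rewrite -htens_comp hcomp1l. Qed.

Lemma htens_split X Y X' Y' (f : hom X Y) (g : hom X' Y') :
  htens f g = hcomp (htens f (hid Y')) (htens (hid X) g).
Proof. by rewrite -htens_comp hcomp1l hcomp1r. Qed.

Lemma htens_split_rev X Y X' Y' (f : hom X Y) (g : hom X' Y') :
  htens f g = hcomp (htens (hid Y) g) (htens f (hid X')).
Proof. by rewrite -htens_comp hcomp1l hcomp1r. Qed.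

Definition split_epi X Y (f : hom X Y) := exists g : hom Y X, hcomp f g = hid Y.

Lemma split_epi_id X : split_epi (hid X).
Proof. by exists (hid X); rewrite hcomp1l. Qed.

Lemma split_epi_assoc X Y Z : split_epi (hassoc X Y Z).
Proof.
have [a' [da ca _ Eaa']] := alpha_iso X Y Z.
by exists (Hom a' da ca); apply: hom_eq.
Qed.

Lemma split_epi_comp X Y Z (f : hom X Y) (g : hom Y Z) :
  split_epi f -> split_epi g -> split_epi (hcomp g f).
Proof.
move=> [f' Ef] [g' Eg]; exists (hcomp f' g').
by rewrite hcompA -(hcompA f' f g) Ef hcomp1r Eg.
Qed.

Lemma split_epi_tens X Y X' Y' (f : hom X Y) (g : hom X' Y') :
  split_epi f -> split_epi g -> split_epi (htens f g).
Proof.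
by move=> [f' Ef] [g' Eg]; exists (htens f' g'); rewrite -htens_comp Ef Eg htens_id.
Qed.

Lemma split_epi_fix_id X Y (x : hom X X) (z : hom Y X) :
  split_epi z -> hcomp x z = z -> x = hid X.
Proof. by move=> [z' Ez] Exz; rewrite -(hcomp1r x) -Ez hcompA Exz. Qed.

End TypedOperations.

(* [ascending n s]: s lists, in increasing order, elements of {1, ..., n};
   such a list of length l describes an order-preserving injection l -> n. *)
Definition ascending (n : nat) (s : seq nat) : bool :=
  sorted ltn s && all (fun x => 0 < x <= n) s.

Definition valid (N k j i : nat) : bool := ascending N [:: i; j; k].

Section Defect.
Variables (A : AssocCat) (N : nat) (p : nat -> nat -> Ob A).
Variables (t : forall {k j i}, valid N k j i -> hom (tob (p k j) (p j i)) (p k i))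
          (u : forall {k j i}, valid N k j i -> hom (p k i) (tob (p k j) (p j i))).
Hypothesis ut : forall k j i (h : valid N k j i), hcomp (u h) (t h) = hid _.

Definition defect d c b a (h_dca : valid N d c a) (h_cba : valid N c b a)
    (h_dcb : valid N d c b) (h_dba : valid N d b a) : hom (p d a) (p d a) :=
  hcomp (t h_dca) (hcomp (htens (hid (p d c)) (t h_cba))
    (hcomp (hassoc (p d c) (p c b) (p b a))
      (hcomp (htens (u h_dcb) (hid (p b a))) (u h_dba)))).

Lemma defect_square d c b a h_dca h_cba h_dcb h_dba :
  hcomp (@defect d c b a h_dca h_cba h_dcb h_dba)
        (hcomp (t h_dba) (htens (t h_dcb) (hid (p b a))))
  = hcomp (t h_dca) (hcomp (htens (hid (p d c)) (t h_cba))
                           (hassoc (p d c) (p c b) (p b a))).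
Proof.
rewrite /defect -!hcompA [hcomp (u _) (hcomp (t _) _)]hcompA ut hcomp1l.
by rewrite -htens_comp ut hcomp1l htens_id hcomp1r.
Qed.

Lemma defect_square_comp d c b a h_dca h_cba h_dcb h_dba Z
    (x : hom Z (tob (tob (p d c) (p c b)) (p b a))) :
  hcomp (@defect d c b a h_dca h_cba h_dcb h_dba)
        (hcomp (t h_dba) (hcomp (htens (t h_dcb) (hid (p b a))) x))
  = hcomp (t h_dca) (hcomp (htens (hid (p d c)) (t h_cba))
                           (hcomp (hassoc (p d c) (p c b) (p b a)) x)).
Proof. by rewrite (hcompA x) hcompA defect_square -!hcompA. Qed.
End Defect.

Section Pentagon.
Variables (A : AssocCat) (p : nat -> nat -> Ob A).
Variables (t : forall {k j i}, valid 5 k j i -> hom (tob (p k j) (p j i)) (p k i))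
          (u : forall {k j i}, valid 5 k j i -> hom (p k i) (tob (p k j) (p j i))).
Hypotheses (ut : forall k j i (h : valid 5 k j i), hcomp (u h) (t h) = hid _)
           (tu : forall k j i (h : valid 5 k j i), hcomp (t h) (u h) = hid _).

Local Notation T k j i := (@t k j i isT).
Local Notation U k j i := (@u k j i isT).
Local Notation D d c b a := (@defect _ _ _ (@t) (@u) d c b a isT isT isT isT).

Let E1 := D 5 3 2 1.
Let E2 := D 5 4 2 1.
Let E3 := D 5 4 3 1.
Let E4 := hcomp (T 5 2 1) (hcomp (htens (D 5 4 3 2) (hid (p 2 1))) (U 5 2 1)).
Let E5 := hcomp (T 5 4 1) (hcomp (htens (hid (p 5 4)) (D 4 3 2 1)) (U 5 4 1)).

(* With w, x, y, z = p 5 4, p 4 3, p 3 2, p 2 1, phi_n composes thetas from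
   the n-th bracketing ((wx)y)z, (w(xy))z, w((xy)z), w(x(yz)), (wx)(yz)
   down to p 5 1. *)
Let phi1 := hcomp (T 5 2 1)
  (htens (hcomp (T 5 3 2) (htens (T 5 4 3) (hid (p 3 2)))) (hid (p 2 1))).
Let phi2 := hcomp (T 5 2 1)
  (htens (hcomp (T 5 4 2) (htens (hid (p 5 4)) (T 4 3 2))) (hid (p 2 1))).
Let phi3 := hcomp (T 5 4 1)
  (htens (hid (p 5 4)) (hcomp (T 4 2 1) (htens (T 4 3 2) (hid (p 2 1))))).
Let phi4 := hcomp (T 5 4 1)
  (htens (hid (p 5 4)) (hcomp (T 4 3 1) (htens (hid (p 4 3)) (T 3 2 1)))).
Let phi5 := hcomp (T 5 3 1) (htens (T 5 4 3) (T 3 2 1)).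

Lemma edge12 : hcomp E4 phi1
  = hcomp phi2 (htens (hassoc (p 5 4) (p 4 3) (p 3 2)) (hid (p 2 1))).
Proof.
rewrite /E4 /phi1 -!hcompA hcompKl // -htens_comp hcomp1l (defect_square ut).
by rewrite /phi2 !htens_compl -!hcompA.
Qed.

Lemma edge23 : hcomp E2 phi2
  = hcomp phi3 (hassoc (p 5 4) (tob (p 4 3) (p 3 2)) (p 2 1)).
Proof.
rewrite /phi2 htens_compl (defect_square_comp ut) hassoc_nat.
by rewrite /phi3 htens_compr -!hcompA.
Qed.

Lemma edge34 : hcomp E5 phi3
  = hcomp phi4 (htens (hid (p 5 4)) (hassoc (p 4 3) (p 3 2) (p 2 1))).
Proof.
rewrite /E5 /phi3 -!hcompA hcompKl // -htens_comp hcomp1l (defect_square ut).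
by rewrite /phi4 !htens_compr -!hcompA.
Qed.

Lemma edge15 : hcomp E1 phi1
  = hcomp phi5 (hassoc (tob (p 5 4) (p 4 3)) (p 3 2) (p 2 1)).
Proof.
rewrite /phi1 htens_compl (defect_square_comp ut) hassoc_nat htens_id.
by rewrite /phi5 [in RHS]htens_split_rev -!hcompA.
Qed.

Lemma edge54 : hcomp E3 phi5
  = hcomp phi4 (hassoc (p 5 4) (p 4 3) (tob (p 3 2) (p 2 1))).
Proof.
rewrite /phi5 htens_split (defect_square_comp ut) -htens_id hassoc_nat.
by rewrite /phi4 htens_compr -!hcompA.
Qed.

Lemma split_epi_theta k j i (h : valid 5 k j i) : split_epi (t h).
Proof. by exists (u h); apply: tu. Qed.

Lemma pentagon_defect : E1 = E2 -> E2 = E3 -> E3 = E4 -> E4 = E5 -> E1 = hid (p 5 1).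
Proof.
move=> E12 E23 E34 E45.
pose Z := hcomp phi4 (hcomp (hassoc (p 5 4) (p 4 3) (tob (p 3 2) (p 2 1)))
                            (hassoc (tob (p 5 4) (p 4 3)) (p 3 2) (p 2 1))).
have lower_path : hcomp E3 (hcomp E1 phi1) = Z.
  by rewrite edge15 (hcompA _ phi5) edge54 -hcompA.
have upper_path : hcomp E5 (hcomp E2 (hcomp E4 phi1)) = Z.
  rewrite edge12 (hcompA _ phi2) edge23 -hcompA (hcompA _ phi3) edge34 -hcompA.
  by rewrite hpentagon.
have Z_split : split_epi Z.
  by rewrite /Z /phi4; repeat (apply: split_epi_comp || apply: split_epi_tens);
     apply: split_epi_id || apply: split_epi_assoc || apply: split_epi_theta.
apply: (split_epi_fix_id Z_split).
by rewrite -{1}lower_path -upper_path -E45 -E34 -E23 -E12.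
Qed.

End Pentagon.

Lemma ascending_incr n l s : ascending n.+1 s -> l <= size s -> incr (emb n.+1 l s).
Proof.
case/andP=> s_sorted /allP s_range ls i j ij; rewrite !ffunE.
have ir : i < size s by apply: leq_trans (ltn_ord i) ls.
have jr : j < size s by apply: leq_trans (ltn_ord j) ls.
have := s_range _ (mem_nth 0 ir); have := s_range _ (mem_nth 0 jr).
have := sorted_ltn_nth ltn_trans 0 s_sorted i j ir jr ij.
move: (nth 0 s i) (nth 0 s j) => x y xy y_range x_range.
by rewrite !inordK; lia.
Qed.

Lemma compf_emb n m l (s r : seq nat) :
  all (fun x => x <= m.+1) r -> l <= size r ->
  compf (emb n.+1 m.+1 s) (emb m.+1 l r) = emb n.+1 l [seq nth 0 s x.-1 | x <- r].
Proof.
move=> /allP r_range lr; apply/ffunP => x; rewrite !ffunE; congr inord.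
have xr : x < size r by apply: leq_trans (ltn_ord x) lr.
rewrite (nth_map 0) // inordK //.
by have := r_range _ (mem_nth 0 xr); case: (nth 0 r x) => //= y; rewrite ltnS.
Qed.

Record inverses (A : Cat) (X Y : Ob A) (f g : Mor A) : Prop := Inverses {
  inv_dom : dom f = X; inv_cod : cod f = Y;
  inv_dom' : dom g = Y; inv_cod' : cod g = X;
  inv_left : mcomp g f = idm X; inv_right : mcomp f g = idm Y }.

Lemma functor_inverses (A B : Cat) (fo : Ob A -> Ob B) (fm : Mor A -> Mor B)
    X Y f g :
  is_functor fo fm -> inverses X Y f g -> inverses (fo X) (fo Y) (fm f) (fm g).
Proof.
case=> F_dom F_cod F_id F_comp [fX fY gY gX gf fg].
split; rewrite ?F_dom ?F_cod ?fX ?fY ?gX ?gY //.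
- by rewrite -F_comp ?gf ?F_id // fY gY.
- by rewrite -F_comp ?fg ?F_id // fX gX.
Qed.

Lemma functor_hcomp (A B : AssocCat) (fo : Ob A -> Ob B) (fm : Mor A -> Mor B)
    X Y Z (g : hom Y Z) (f : hom X Y) :
  is_functor fo fm -> fm (hmor (hcomp g f)) = mcomp (fm (hmor g)) (fm (hmor f)).
Proof. by case=> _ _ _ F_comp; apply: F_comp; apply: hom_link. Qed.

Section Transport.
Variables (C : nat -> AssocCat)
  (Fo : forall l m, {ffun 'I_l -> 'I_m} -> Ob (C l) -> Ob (C m))
  (Fm : forall l m, {ffun 'I_l -> 'I_m} -> Mor (C l) -> Mor (C m)).
Hypothesis HF : forall l m (lam : {ffun 'I_l -> 'I_m}),
  2 <= l -> l < m -> m <= 5 -> incr lam ->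
  [/\ is_functor (@Fo l m lam) (@Fm l m lam),
      faithful (@Fm l m lam)
    & strict_assoc (@Fo l m lam) (@Fm l m lam)].
Hypothesis Hcomp : forall l m n (s : {ffun 'I_l -> 'I_m}) (t : {ffun 'I_m -> 'I_n}),
  2 <= l -> l < m -> m < n -> n <= 5 -> incr s -> incr t ->
  (forall A, @Fo l n (compf t s) A = @Fo m n t (@Fo l m s A)) /\
  (forall f, @Fm l n (compf t s) f = @Fm m n t (@Fm l m s f)).

Lemma emb_functor n l s : 2 <= l -> l < n.+1 -> n < 5 ->
  ascending n.+1 s -> l <= size s ->
  [/\ is_functor (Fo (emb n.+1 l s)) (Fm (emb n.+1 l s)),
      faithful (Fm (emb n.+1 l s))
    & strict_assoc (Fo (emb n.+1 l s)) (Fm (emb n.+1 l s))].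
Proof. by move=> l2 ln n5 s_asc ls; apply: HF => //; apply: ascending_incr. Qed.

Lemma emb_comp l m n (r s : seq nat) :
  2 <= l -> l < m.+1 -> m < n -> n < 5 ->
  ascending m.+1 r -> l <= size r -> ascending n.+1 s -> m.+1 <= size s ->
  (forall X, Fo (emb n.+1 m.+1 s) (Fo (emb m.+1 l r) X)
             = Fo (emb n.+1 l [seq nth 0 s x.-1 | x <- r]) X) /\
  (forall f, Fm (emb n.+1 m.+1 s) (Fm (emb m.+1 l r) f)
             = Fm (emb n.+1 l [seq nth 0 s x.-1 | x <- r]) f).
Proof.
move=> l2 lm mn n5 r_asc lr s_asc ms.
have [FoE FmE] := Hcomp l2 lm (mn : m.+1 < n.+1) (n5 : n.+1 <= 5)
  (ascending_incr r_asc lr) (ascending_incr s_asc ms).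
have r_range : all (fun x => x <= m.+1) r.
  by apply/allP => x /(allP (proj2 (andP r_asc))) /andP[].
by rewrite compf_emb // in FoE FmE; split=> [X|f]; [rewrite FoE | rewrite FmE].
Qed.

Variable P : Ob (C 2).

Lemma Pji_image m n s i j : 2 < m.+1 -> m < n -> n < 5 ->
  ascending m.+1 [:: i; j] -> ascending n.+1 s -> m.+1 <= size s ->
  Fo (emb n.+1 m.+1 s) (Pji Fo P m.+1 i j)
  = Pji Fo P n.+1 (nth 0 s i.-1) (nth 0 s j.-1).
Proof.
by move=> m2 mn n5 ij_asc s_asc ms; rewrite /Pji (emb_comp _ _ _ _ ij_asc _ s_asc ms).1.
Qed.

Lemma thk_image (th : Mor (C 3)) m n s i j k : 3 < m.+1 -> m < n -> n < 5 ->
  ascending m.+1 [:: i; j; k] -> ascending n.+1 s -> m.+1 <= size s ->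
  Fm (emb n.+1 m.+1 s) (thk Fm th m.+1 i j k)
  = thk Fm th n.+1 (nth 0 s i.-1) (nth 0 s j.-1) (nth 0 s k.-1).
Proof.
by move=> m3 mn n5 ijk_asc s_asc ms; rewrite /thk (emb_comp _ _ _ _ ijk_asc _ s_asc ms).2.
Qed.

Variables (th th' : Mor (C 3)).
Hypothesis th_inv :
  inverses (tob (Pji Fo P 3 2 3) (Pji Fo P 3 1 2)) (Pji Fo P 3 1 3) th th'.

(* P_kj in C_(n+1), indexed in the descending order used by theta_kji. *)
Definition Pobj n k j : Ob (C n.+1) := Pji Fo P n.+1 j k.

Lemma thk_inverses n k j i : 3 <= n -> n < 5 -> valid n.+1 k j i ->
  inverses (tob (Pobj n k j) (Pobj n j i)) (Pobj n k i)
           (thk Fm th n.+1 i j k) (thk' Fm th' n.+1 i j k).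
Proof.
move=> n3 n5 h.
have [Ffun _ [F_tob _ _]] := emb_functor (l:=3) isT n3 n5 h isT.
have := functor_inverses Ffun th_inv.
by rewrite F_tob !(Pji_image (m:=2)).
Qed.

Section TypedTheta.
Variable n : nat.
Hypotheses (n3 : 3 <= n) (n5 : n < 5).

Definition theta k j i (h : valid n.+1 k j i) :
    hom (tob (Pobj n k j) (Pobj n j i)) (Pobj n k i) :=
  Hom _ (inv_dom (thk_inverses n3 n5 h)) (inv_cod (thk_inverses n3 n5 h)).

Definition theta_inv k j i (h : valid n.+1 k j i) :
    hom (Pobj n k i) (tob (Pobj n k j) (Pobj n j i)) :=
  Hom _ (inv_dom' (thk_inverses n3 n5 h)) (inv_cod' (thk_inverses n3 n5 h)).

Lemma theta_invK k j i (h : valid n.+1 k j i) :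
  hcomp (theta_inv h) (theta h) = hid _.
Proof. by apply: hom_eq; apply: inv_left (thk_inverses n3 n5 h). Qed.

Lemma thetaK k j i (h : valid n.+1 k j i) :
  hcomp (theta h) (theta_inv h) = hid _.
Proof. by apply: hom_eq; apply: inv_right (thk_inverses n3 n5 h). Qed.
End TypedTheta.

Lemma Cmor_defect : Cmor Fo Fm P th th' =
  hmor (defect (theta (n:=3) isT isT) (theta_inv (n:=3) isT isT)
          (d:=4) (c:=3) (b:=2) (a:=1) isT isT isT isT).
Proof. by []. Qed.

Lemma CS_defect a b c d h_dca h_cba h_dcb h_dba :
  CS Fo Fm P th th' [:: a; b; c; d] =
  hmor (defect (theta (n:=4) isT isT) (theta_inv (n:=4) isT isT)
          (d:=d) (c:=c) (b:=b) (a:=a) h_dca h_cba h_dcb h_dba).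
Proof.
have S_asc : ascending 5 [:: a; b; c; d].
  by move: h_cba h_dcb; rewrite /valid /ascending /=; lia.
have [Ffun _ [_ F_tmor F_alpha]] := emb_functor (n:=4) (l:=4) isT isT isT S_asc isT.
rewrite /CS Cmor_defect /defect !(functor_hcomp _ _ Ffun) /=.
case: Ffun => _ _ F_id _.
by rewrite !F_tmor !F_id !F_alpha !thk_image // /Pobj !Pji_image.
Qed.

Lemma Cmor_id_of_image S : ascending 5 S -> size S = 4 ->
  CS Fo Fm P th th' S = idm (Pji Fo P 5 (nth 0 S 0) (nth 0 S 3)) ->
  Cmor Fo Fm P th th' = idm (Pji Fo P 4 1 4).
Proof.
move=> S_asc S4 CS_id.
have S4' : 4 <= size S by rewrite S4.
have [[_ _ F_id _] F_faithful _] := emb_functor (n:=4) (l:=4) isT isT isT S_asc S4'.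
apply: F_faithful.
- by rewrite Cmor_defect hom_dom dom_idm.
- by rewrite Cmor_defect hom_cod cod_idm.
- by rewrite F_id (Pji_image (m:=3)).
Qed.

(* The five hypotheses of the theorem are the defect identities of the
   pentagon for P_54 (x) P_43 (x) P_32 (x) P_21 in C_5. *)
Lemma CS_1235_id
  (Hfive :
     let X1 := CS Fo Fm P th th' [:: 1; 2; 3; 5] in
     let X2 := CS Fo Fm P th th' [:: 1; 2; 4; 5] in
     let X3 := CS Fo Fm P th th' [:: 1; 3; 4; 5] in
     let X4 := mcomp (thk Fm th 5 1 2 5)
                 (mcomp (tmor (CS Fo Fm P th th' [:: 2; 3; 4; 5]) (idm (Pji Fo P 5 1 2)))
                       (thk Fm th' 5 1 2 5)) in
     let X5 := mcomp (thk Fm th 5 1 4 5)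
                 (mcomp (tmor (idm (Pji Fo P 5 4 5)) (CS Fo Fm P th th' [:: 1; 2; 3; 4]))
                       (thk Fm th' 5 1 4 5)) in
     [/\ X1 = X2, X2 = X3, X3 = X4 & X4 = X5]) :
  CS Fo Fm P th th' [:: 1; 2; 3; 5] = idm (Pji Fo P 5 1 5).
Proof.
move: Hfive => /=.
rewrite (CS_defect (a:=1) (b:=2) (c:=3) (d:=5) isT isT isT isT).
rewrite (CS_defect (a:=1) (b:=2) (c:=4) (d:=5) isT isT isT isT).
rewrite (CS_defect (a:=1) (b:=3) (c:=4) (d:=5) isT isT isT isT).
rewrite (CS_defect (a:=2) (b:=3) (c:=4) (d:=5) isT isT isT isT).
rewrite (CS_defect (a:=1) (b:=2) (c:=3) (d:=4) isT isT isT isT).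
case=> E12 E23 E34 E45.
apply: (f_equal (@hmor _ _ _)
  (pentagon_defect (@theta_invK 4 isT isT) (@thetaK 4 isT isT) _ _ _ _)).
- by apply: hom_eq; exact: E12.
- by apply: hom_eq; exact: E23.
- by apply: hom_eq; exact: E34.
- by apply: hom_eq; exact: E45.
Qed.

End Transport.

Theorem mainTheorem2
  (C : nat -> AssocCat)
  (Fo : forall l m, {ffun 'I_l -> 'I_m} -> Ob (C l) -> Ob (C m))
  (Fm : forall l m, {ffun 'I_l -> 'I_m} -> Mor (C l) -> Mor (C m))
  (HF : forall l m (lam : {ffun 'I_l -> 'I_m}),
      2 <= l -> l < m -> m <= 5 -> incr lam ->
      [/\ is_functor (Fo l m lam) (Fm l m lam),
          faithful (Fm l m lam)
        & strict_assoc (Fo l m lam) (Fm l m lam)])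
  (Hcomp : forall l m n (s : {ffun 'I_l -> 'I_m}) (t : {ffun 'I_m -> 'I_n}),
      2 <= l -> l < m -> m < n -> n <= 5 -> incr s -> incr t ->
      (forall A, Fo l n (compf t s) A = Fo m n t (Fo l m s A)) /\
      (forall f, Fm l n (compf t s) f = Fm m n t (Fm l m s f)))
  (P : Ob (C 2)) (th th' : Mor (C 3))
  (Hth : dom th = tob (Pji Fo P 3 2 3) (Pji Fo P 3 1 2) /\
         cod th = Pji Fo P 3 1 3)
  (Hth' : [/\ dom th' = cod th, cod th' = dom th,
              mcomp th' th = idm (dom th)
            & mcomp th th' = idm (cod th)])
  (Hfive :
     let X1 := CS Fo Fm P th th' [:: 1; 2; 3; 5] in
     let X2 := CS Fo Fm P th th' [:: 1; 2; 4; 5] in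
     let X3 := CS Fo Fm P th th' [:: 1; 3; 4; 5] in
     let X4 := mcomp (thk Fm th 5 1 2 5)
                 (mcomp (tmor (CS Fo Fm P th th' [:: 2; 3; 4; 5]) (idm (Pji Fo P 5 1 2)))
                       (thk Fm th' 5 1 2 5)) in
     let X5 := mcomp (thk Fm th 5 1 4 5)
                 (mcomp (tmor (idm (Pji Fo P 5 4 5)) (CS Fo Fm P th th' [:: 1; 2; 3; 4]))
                       (thk Fm th' 5 1 4 5)) in
     [/\ X1 = X2, X2 = X3, X3 = X4 & X4 = X5]) :
  Cmor Fo Fm P th th' = idm (Pji Fo P 4 1 4).
Proof.
have th_inv : inverses (tob (Pji Fo P 3 2 3) (Pji Fo P 3 1 2)) (Pji Fo P 3 1 3) th th'.
  case: Hth Hth' => dom_th cod_th [dom_th' cod_th' th'_th th_th'].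
  by split; rewrite -?dom_th -?cod_th.
apply: (Cmor_id_of_image HF Hcomp th_inv (S := [:: 1; 2; 3; 5])) => //.
exact: (CS_1235_id HF Hcomp th_inv Hfive).
Qed.
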